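(* Let $\hat v\in\{0,1\}^{\mathcal T}$ be the indicator vector of a proper triple set. Then the optimal objective value of the linear program $\mathrm{D}(\hat v)$ lies in the interval $[-\eta,0]$, where $\eta=-\sum_{i=1}^m\min(0,\alpha_i)$ and $\mathrm{D}(\hat v)$ is: maximize $-\sum_{t\in\mathcal T}\big[(1-\hat v_t)(\lambda_{t,1}+\lambda_{t,2})+(2-\hat v_t)\lambda_{t,3}\big]-\sum_{J\in\mathcal N}\mu_J$ over $\lambda_{t,1},\lambda_{t,2},\lambda_{t,3}\ge0$ ($t\in\mathcal T$) and $\mu_J\ge 0$ ($J\in\mathcal N$), subject to, for every $J\in\mathcal N$, $\beta_J+\sum_{t:\mathsf{tail1}(t)=J}(-\lambda_{t,1}+\lambda_{t,3})+\sum_{t:\mathsf{tail2}(t)=J}(-\lambda_{t,2}+\lambda_{t,3})+\sum_{t:\mathsf{head}(t)=J}(\lambda_{t,1}+\lambda_{t,2}-\lambda_{t,3})+\mu_J\ge 0.$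
   Context: A multilinear program has data $n,m$, coefficients $\alpha_i\in\mathbb{R}$ and nonempty index sets $J_i\subseteq[n]$. Let $\mathcal N=\bigcup_i\{J:\emptyset\ne J\subseteq J_i\}$ and $\beta_J=\sum_{i:J_i=J}\alpha_i$ for $J\in\mathcal N$. A triple is $t=(J,J',J'')$ with $J''\in\mathcal N$, $|J''|\ge2$, $J,J'$ nonempty, disjoint, $J\cup J'=J''$, listed with $J,J'$ in lexicographic order; $\mathsf{tail1}(t)=J$, $\mathsf{tail2}(t)=J'$, $\mathsf{head}(t)=J''$; $\mathcal T$ is the set of all triples. A proper triple set is a set $T\subseteq\mathcal T$ containing a subset $T'$ such that (1) every $J_i$ with $|J_i|>1$ is the head of some triple in $T'$, and (2) whenever a set $J$ with $|J|>1$ is the first or second element of a triple in $T'$, $J$ is the head of a different triple in $T'$; its indicator vector has $\hat v_t=1$ iff $t\in T$. $\mathrm{D}(\hat v)$ is the LP dual of the McCormick relaxation $\min\sum_J\beta_Jy_J$ over $y\in[0,1]^{\mathcal N}$ subject to $y_{J''}-y_J\le1-\hat v_t$, $y_{J''}-y_{J'}\le1-\hat v_t$, $y_J+y_{J'}-y_{J''}\le2-\hat v_t$ for all $t=(J,J',J'')\in\mathcal T$ (with $\lambda_{t,1},\lambda_{t,2},\lambda_{t,3}$ the multipliers of these three inequalities and $\mu_J$ that of $y_J\le1$). *)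

From HB Require Import structures.
From mathcomp Require Import all_boot all_order all_algebra.
From mathcomp Require Import reals.
Set Implicit Arguments. Unset Strict Implicit. Unset Printing Implicit Defensive.
Import Order.TTheory GRing.Theory Num.Theory.
Local Open Scope ring_scope.

Definition calN (n m : nat) (Js : 'I_m -> {set 'I_n}) : {set {set 'I_n}} :=
  [set J : {set 'I_n} | (J != set0) && [exists i : 'I_m, J \subset Js i]].

Definition beta (R : realType) (n m : nat) (alpha : 'I_m -> R)
    (Js : 'I_m -> {set 'I_n}) (J : {set 'I_n}) : R :=
  \sum_(i < m | Js i == J) alpha i.

Fixpoint lex_lt (s1 s2 : seq nat) : bool :=
  match s1, s2 with
  | [::], [::] => false
  | [::], _ :: _ => true
  | _ :: _, [::] => false
  | x :: s1', y :: s2' => (x < y)%N || ((x == y) && lex_lt s1' s2')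
  end.

Definition setseq (n : nat) (A : {set 'I_n}) : seq nat :=
  sort leq [seq nat_of_ord i | i <- enum A].

Definition trip (n : nat) : finType :=
  ({set 'I_n} * {set 'I_n} * {set 'I_n})%type.
Definition tail1 (n : nat) (t : trip n) : {set 'I_n} := t.1.1.
Definition tail2 (n : nat) (t : trip n) : {set 'I_n} := t.1.2.
Definition head (n : nat) (t : trip n) : {set 'I_n} := t.2.

Definition calT (n m : nat) (Js : 'I_m -> {set 'I_n}) : {set trip n} :=
  [set t : trip n |
    [&& head t \in calN Js, (1 < #|head t|)%N,
        tail1 t != set0, tail2 t != set0,
        [disjoint tail1 t & tail2 t],
        tail1 t :|: tail2 t == head t &
        lex_lt (setseq (tail1 t)) (setseq (tail2 t))]].

Definition proper_triple_set (n m : nat) (Js : 'I_m -> {set 'I_n})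
    (T : {set trip n}) : Prop :=
  T \subset calT Js /\
  exists T' : {set trip n}, T' \subset T /\
    (forall i : 'I_m, (1 < #|Js i|)%N ->
       exists t, t \in T' /\ head t = Js i) /\
    (forall t, t \in T' ->
       ((1 < #|tail1 t|)%N -> exists t', [/\ t' \in T', t' != t & head t' = tail1 t]) /\
       ((1 < #|tail2 t|)%N -> exists t', [/\ t' \in T', t' != t & head t' = tail2 t])).

Definition vhat (R : realType) (n : nat) (T : {set trip n}) (t : trip n) : R :=
  if t \in T then 1 else 0.

Definition D_feasible (R : realType) (n m : nat) (alpha : 'I_m -> R)
    (Js : 'I_m -> {set 'I_n}) (v : trip n -> R)
    (l1 l2 l3 : trip n -> R) (mu : {set 'I_n} -> R) : Prop :=
  (forall t, t \in calT Js -> [/\ 0 <= l1 t, 0 <= l2 t & 0 <= l3 t]) /\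
  (forall J, J \in calN Js -> 0 <= mu J) /\
  (forall J, J \in calN Js ->
     0 <= beta alpha Js J
          + \sum_(t in calT Js | tail1 t == J) (- l1 t + l3 t)
          + \sum_(t in calT Js | tail2 t == J) (- l2 t + l3 t)
          + \sum_(t in calT Js | head t == J) (l1 t + l2 t - l3 t)
          + mu J).

Definition D_obj (R : realType) (n m : nat) (Js : 'I_m -> {set 'I_n})
    (v : trip n -> R) (l1 l2 l3 : trip n -> R) (mu : {set 'I_n} -> R) : R :=
  - (\sum_(t in calT Js) ((1 - v t) * (l1 t + l2 t) + (2 - v t) * l3 t))
  - \sum_(J in calN Js) mu J.

Definition eta_val (R : realType) (m : nat) (alpha : 'I_m -> R) : R :=
  - \sum_(i < m) Num.min 0 (alpha i).

From Pilot Require Import Defs.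
From HB Require Import structures.
From mathcomp Require Import all_boot all_order all_algebra.
From mathcomp Require Import reals.
From mathcomp Require Import ring lra.
Set Implicit Arguments. Unset Strict Implicit. Unset Printing Implicit Defensive.
Import Order.TTheory GRing.Theory Num.Theory.
Local Open Scope ring_scope.

(** Every feasible point of D(v) has objective value at most 0, since v <= 1 and
all multipliers are nonnegative, and the point lambda = 0,
mu_J = - sum_(i : J_i = J) min(0, alpha_i) is feasible with value exactly -eta.
It remains to see that the maximum is attained: a linear program that is
feasible and bounded above has an optimal solution.  This follows from
Fourier-Motzkin elimination, which projects the feasible set onto the
objective value as a polyhedron in one variable, i.e. a closed interval
bounded above. *)

Section FourierMotzkin.
Variables (R : realFieldType) (V : finType).
(* (a, b) stands for the inequality dot a x <= b; coefficient vectors are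
   finfuns so that systems of inequalities are sequences over an eqType. *)
Local Notation ineq := ({ffun V -> R} * R)%type.
Implicit Types (u v : V) (t : R) (a x y : V -> R) (c p q : ineq) (cs : seq ineq).

Definition dot a x : R := \sum_u a u * x u.

Definition solves cs x : bool := all (fun c => dot c.1 x <= c.2) cs.

Definition upd x v t : V -> R := fun u => if u == v then t else x u.

Lemma dotD a1 a2 x : dot (fun u => a1 u + a2 u) x = dot a1 x + dot a2 x.
Proof. by rewrite /dot -big_split; apply: eq_bigr => u _; rewrite mulrDl. Qed.

Lemma dotN a x : dot (fun u => - a u) x = - dot a x.
Proof. by rewrite /dot -sumrN; apply: eq_bigr => u _; rewrite mulNr. Qed.

Lemma dotZ k a x : dot (fun u => k * a u) x = k * dot a x.
Proof. by rewrite /dot mulr_sumr; apply: eq_bigr => u _; rewrite mulrA. Qed.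

Lemma dot_suml (I : Type) (r : seq I) (P : pred I) (F : I -> V -> R) x :
  dot (fun u => \sum_(i <- r | P i) F i u) x = \sum_(i <- r | P i) dot (F i) x.
Proof.
by rewrite /dot [RHS]exchange_big; apply: eq_bigr => u _; rewrite mulr_suml.
Qed.

Lemma dot_finfun a x : dot (finfun a) x = dot a x.
Proof. by rewrite /dot; apply: eq_bigr => u _; rewrite ffunE. Qed.

Lemma eq_dot a x y : x =1 y -> dot a x = dot a y.
Proof. by move=> xy; rewrite /dot; apply: eq_bigr => u _; rewrite xy. Qed.

Lemma dot_upd a x v t : dot a (upd x v t) = dot a x + a v * (t - x v).
Proof.
rewrite /dot (bigD1 v) // [in RHS](bigD1 v) //= /upd eqxx.
rewrite (eq_bigr (fun u => a u * x u)) => [|u /negbTE ->] //; ring.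
Qed.

Lemma dot_upd_free a x v t : a v = 0 -> dot a (upd x v t) = dot a x.
Proof. by move=> av0; rewrite dot_upd av0 mul0r addr0. Qed.

Definition combine v p q : ineq :=
  ([ffun u => - q.1 v * p.1 u + p.1 v * q.1 u], - q.1 v * p.2 + p.1 v * q.2).

Lemma combine_free v p q : (combine v p q).1 v = 0.
Proof. by rewrite ffunE; ring. Qed.

Lemma combine_free_in u v p q : p.1 u = 0 -> q.1 u = 0 -> (combine v p q).1 u = 0.
Proof. by rewrite ffunE => -> ->; ring. Qed.

Lemma solves_combine v p q x : 0 < p.1 v -> q.1 v < 0 ->
  dot p.1 x <= p.2 -> dot q.1 x <= q.2 -> dot (combine v p q).1 x <= (combine v p q).2.
Proof.
move=> pv qv px qx; rewrite dot_finfun dotD !dotZ.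
by apply: lerD; apply: ler_wpM2l => //; lra.
Qed.

Definition eliminate v cs :=
  [seq c : ineq <- cs | c.1 v == 0] ++
  [seq combine v p q | p <- [seq c : ineq <- cs | 0 < c.1 v],
                       q <- [seq c : ineq <- cs | c.1 v < 0]].

Lemma mem_eliminate v cs c : c \in eliminate v cs ->
  (c \in cs /\ c.1 v = 0) \/
  exists p q, [/\ p \in cs, q \in cs, 0 < p.1 v, q.1 v < 0 & c = combine v p q].
Proof.
rewrite mem_cat mem_filter => /orP [/andP [/eqP cv0 ccs]|]; first by left.
case/allpairsP => -[p q] /=; rewrite !mem_filter => -[/andP [pv pcs] /andP [qv qcs] ->].
by right; exists p, q.
Qed.

Lemma combine_mem_eliminate v cs p q : p \in cs -> q \in cs -> 0 < p.1 v -> q.1 v < 0 ->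
  combine v p q \in eliminate v cs.
Proof.
move=> pcs qcs pv qv; rewrite mem_cat; apply/orP; right.
by apply: allpairs_f; rewrite mem_filter ?pv ?qv.
Qed.

Lemma eliminate_free v cs c : c \in eliminate v cs -> c.1 v = 0.
Proof. by case/mem_eliminate => [[]|[p [q [_ _ _ _ ->]]]] //; apply: combine_free. Qed.

Lemma eliminate_free_in u v cs :
  {in cs, forall c, c.1 u = 0} -> {in eliminate v cs, forall c, c.1 u = 0}.
Proof.
move=> csu c /mem_eliminate [[/csu]|[p [q [/csu pu /csu qu _ _ ->]]]] //.
exact: combine_free_in.
Qed.

Lemma exists_between (L U : seq R) : {in L & U, forall lo hi, lo <= hi} ->
  exists t, {in L, forall lo, lo <= t} /\ {in U, forall hi, t <= hi}.
Proof.
move=> LU; pose m := \big[Num.min/0]_(hi <- U) hi.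
exists (\big[Num.max/m]_(lo <- L) lo); split => [lo loL|hi hiU].
  exact: le_bigmax_seq.
rewrite big_seq; apply: bigmax_le => [|lo loL]; last exact: LU.
exact: ge_bigmin_seq.
Qed.

Lemma eliminateP v cs x : solves (eliminate v cs) x <-> exists t, solves cs (upd x v t).
Proof.
split; last first.
  case=> t /allP sol; apply/allP => c /mem_eliminate [[ccs cv0]|[p [q [pcs qcs pv qv ->]]]].
    by rewrite -(dot_upd_free x t cv0); apply: sol.
  rewrite -(dot_upd_free x t (combine_free v p q)).
  by apply: solves_combine => //; apply: sol.
(* Shifting x v by s keeps c satisfied iff s lies on the right side of
   slack c; combine v p q is the constraint slack q <= slack p. *)
move=> /allP sol; pose slack c := (c.2 - dot c.1 x) / c.1 v.
have [s [sL sU]] : exists s,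
    {in [seq slack c | c <- cs & c.1 v < 0], forall lo, lo <= s} /\
    {in [seq slack c | c <- cs & 0 < c.1 v], forall hi, s <= hi}.
  apply: exists_between => _ _ /mapP [q + ->] /mapP [p + ->].
  rewrite !mem_filter => /andP [qv qcs] /andP [pv pcs].
  have := sol _ (combine_mem_eliminate pcs qcs pv qv).
  rewrite /slack ler_ndivrMr // mulrAC ler_pdivrMr // dot_finfun dotD !dotZ /=.
  by move=> ?; nra.
exists (x v + s); apply/allP => c ccs; rewrite dot_upd addrAC subrr add0r.
case: (ltgtP (c.1 v) 0) => cv.
- have cN : c \in [seq c : ineq <- cs | c.1 v < 0] by rewrite mem_filter cv.
  by have := sL _ (map_f slack cN); rewrite /slack ler_ndivrMr //; lra.
- have cP : c \in [seq c : ineq <- cs | 0 < c.1 v] by rewrite mem_filter cv.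
  by have := sU _ (map_f slack cP); rewrite /slack ler_pdivlMr //; lra.
- by have := sol c; rewrite mem_cat mem_filter cv eqxx ccs mul0r addr0; apply.
Qed.

Definition eliminate_all vs cs := foldr eliminate cs vs.

Lemma eliminate_all_free vs cs c u : c \in eliminate_all vs cs -> u \in vs -> c.1 u = 0.
Proof.
elim: vs c => [|v vs IH] c //= cE; rewrite in_cons => /orP [/eqP ->|uvs].
  exact: eliminate_free cE.
by apply: eliminate_free_in cE => c' c'E; apply: IH.
Qed.

Lemma eliminate_allP vs cs x : solves (eliminate_all vs cs) x <->
  exists2 y, solves cs y & forall u, u \notin vs -> y u = x u.
Proof.
elim: vs x => [|v vs IH] x /=.
  split => [sol|[y sol yx]]; first by exists x.
  have xy : x =1 y by move=> u; rewrite yx.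
  by apply: etrans sol; apply: eq_all => c; rewrite /= (eq_dot _ xy).
rewrite eliminateP; split => [[t /IH [y sol yx]]|[y sol yx]].
  exists y => // u; rewrite in_cons negb_or => /andP [uv uvs].
  by rewrite yx // /upd (negbTE uv).
exists (y v); apply/IH; exists y => // u uvs; rewrite /upd.
by case: eqP => [->|/eqP uv] //; apply: yx; rewrite in_cons negb_or uv.
Qed.

Lemma coord_max_attained cs z x0 B : solves cs x0 -> (forall x, solves cs x -> x z <= B) ->
  exists2 x, solves cs x & forall y, solves cs y -> y z <= x z.
Proof.
move=> sol0 bound; pose E := eliminate_all [seq u <- enum V | u != z] cs.
have dot_proj c x : c \in E -> dot c.1 x = c.1 z * x z.
  move=> cE; rewrite /dot (bigD1 z) //= big1 ?addr0 // => u uz.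
  by rewrite (eliminate_all_free cE) ?mul0r // mem_filter uz mem_enum.
have solvesE x : solves E x <-> exists2 y, solves cs y & y z = x z.
  rewrite eliminate_allP; split => -[y sol yx]; exists y => //.
    by apply: yx; rewrite mem_filter eqxx.
  by move=> u; rewrite mem_filter mem_enum andbT negbK => /eqP ->.
pose s := \big[Num.min/B]_(c <- E | 0 < c.1 z) (c.2 / c.1 z).
have le_s x : solves cs x -> x z <= s.
  move=> sol; have /allP solE : solves E x by apply/solvesE; exists x.
  rewrite /s big_seq_cond; apply: le_bigmin => [|c /andP [cE cz]]; first exact: bound.
  by rewrite ler_pdivlMr // mulrC -dot_proj //; apply: solE.
have /solvesE [y sol ys] : solves E (fun _ => s).
  apply/allP => c cE; rewrite dot_proj //; case: (ltP 0 (c.1 z)) => cz.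
    by rewrite mulrC -ler_pdivlMr //; apply: ge_bigmin_seq.
  have /allP solE0 : solves E x0 by apply/solvesE; exists x0.
  apply: le_trans (ler_wnM2l cz (le_s _ sol0)) _.
  by rewrite -dot_proj //; apply: solE0.
by exists y => // y' /le_s; rewrite ys.
Qed.

End FourierMotzkin.

Lemma lp_max_attained (R : realFieldType) (V : finType) (cs : seq ({ffun V -> R} * R))
    (c : V -> R) x0 B :
  solves cs x0 -> (forall x, solves cs x -> dot c x <= B) ->
  exists2 x, solves cs x & forall y, solves cs y -> dot c y <= dot c x.
Proof.
move=> sol0 bound.
(* The objective value becomes the extra coordinate [inr tt], tied to [dot c]
   by the two inequalities built from [graph]. *)
pose lift (a : V -> R) : {ffun V + unit -> R} := [ffun u => if u is inl w then a w else 0].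
pose graph : {ffun V + unit -> R} := [ffun u => if u is inl w then c w else -1].
pose cs' := [seq (lift p.1, p.2) | p : {ffun V -> R} * R <- cs]
  ++ [:: (graph, 0); ([ffun u => - graph u], 0)].
pose ext (x : V -> R) (u : V + unit) := if u is inl w then x w else dot c x.
have dot_sumType (a y : V + unit -> R) :
    dot a y = dot (a \o inl) (y \o inl) + a (inr tt) * y (inr tt).
  by rewrite /dot big_sumType (big_pred1 tt) // => -[].
have dot_lift (a : V -> R) y : dot (lift a) y = dot a (y \o inl).
  by rewrite dot_finfun dot_sumType /= mul0r addr0.
have dot_graph y : dot graph y = dot c (y \o inl) - y (inr tt).
  by rewrite dot_finfun dot_sumType /= mulN1r.
have solves_ext y : solves cs' y = solves cs (y \o inl) && (y (inr tt) == dot c (y \o inl)).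
  rewrite /solves all_cat all_map /= andbT; congr (_ && _).
    by apply: eq_all => p /=; rewrite dot_lift.
  rewrite dot_graph dot_finfun dotN dot_graph.
  by rewrite oppr_le0 subr_le0 subr_ge0 eq_le andbC.
have [y sol ymax] :
    exists2 y, solves cs' y & forall y', solves cs' y' -> y' (inr tt) <= y (inr tt).
  apply: (coord_max_attained (x0 := ext x0) (B := B)).
    by rewrite solves_ext sol0 eqxx.
  by move=> y; rewrite solves_ext => /andP [soly /eqP ->]; apply: bound.
move: sol; rewrite solves_ext => /andP [soly /eqP yz].
exists (y \o inl) => // y' sol'; rewrite -yz.
by apply: (ymax (ext y')); rewrite solves_ext sol' eqxx.
Qed.

Section DualLP.
Variables (R : realType) (n m : nat) (alpha : 'I_m -> R) (Js : 'I_m -> {set 'I_n}).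
Variable v : trip n -> R.
Hypothesis v_le1 : forall t, v t <= 1.

Definition dual_var : finType := (trip n + trip n + trip n + {set 'I_n})%type.
Definition var1 t : dual_var := inl (inl (inl t)).
Definition var2 t : dual_var := inl (inl (inr t)).
Definition var3 t : dual_var := inl (inr t).
Definition var_mu J : dual_var := inr J.

Definition lam1 (x : dual_var -> R) t := x (var1 t).
Definition lam2 (x : dual_var -> R) t := x (var2 t).
Definition lam3 (x : dual_var -> R) t := x (var3 t).
Definition mu_of (x : dual_var -> R) J := x (var_mu J).

Definition dual_point (l1 l2 l3 : trip n -> R) (mu : {set 'I_n} -> R) (u : dual_var) : R :=
  match u with
  | inl (inl (inl t)) => l1 t
  | inl (inl (inr t)) => l2 t
  | inl (inr t) => l3 t
  | inr J => mu J
  end.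

Definition unit_vec (u w : dual_var) : R := (w == u)%:R.

Lemma dot_unit_vec u x : dot (unit_vec u) x = x u.
Proof.
rewrite /dot (bigD1 u) //= big1 => [|w /negbTE wu]; last by rewrite /unit_vec wu mul0r.
by rewrite /unit_vec eqxx mul1r addr0.
Qed.

Definition D_row J (w : dual_var) : R :=
  \sum_(t in calT Js | tail1 t == J) (- unit_vec (var1 t) w + unit_vec (var3 t) w)
  + \sum_(t in calT Js | tail2 t == J) (- unit_vec (var2 t) w + unit_vec (var3 t) w)
  + \sum_(t in calT Js | Defs.head t == J)
      (unit_vec (var1 t) w + unit_vec (var2 t) w - unit_vec (var3 t) w)
  + unit_vec (var_mu J) w.

Lemma dot_D_row J x : dot (D_row J) x =
  \sum_(t in calT Js | tail1 t == J) (- lam1 x t + lam3 x t)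
  + \sum_(t in calT Js | tail2 t == J) (- lam2 x t + lam3 x t)
  + \sum_(t in calT Js | Defs.head t == J) (lam1 x t + lam2 x t - lam3 x t)
  + mu_of x J.
Proof.
(* Rewriting in a goal with several of these sums makes the unifier compare
   them by conversion, which diverges; congr2 keeps them apart. *)
rewrite /D_row !dotD dot_unit_vec.
apply: (congr2 +%R); last by [].
apply: (congr2 +%R); first apply: (congr2 +%R).
all: rewrite dot_suml; apply: eq_bigr => t _.
all: by rewrite !dotD ?dotN !dot_unit_vec.
Qed.

Definition D_objective (w : dual_var) : R :=
  - \sum_(t in calT Js)
      ((1 - v t) * (unit_vec (var1 t) w + unit_vec (var2 t) w)
       + (2 - v t) * unit_vec (var3 t) w)
  - \sum_(J in calN Js) unit_vec (var_mu J) w.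

Lemma dot_D_objective x :
  dot D_objective x = D_obj Js v (lam1 x) (lam2 x) (lam3 x) (mu_of x).
Proof.
rewrite /D_objective /D_obj dotD !dotN.
apply: (congr2 (fun a b => - a - b)); rewrite dot_suml; apply: eq_bigr => i _.
  by rewrite dotD !dotZ dotD !dot_unit_vec.
exact: dot_unit_vec.
Qed.

Definition sign_constrained (u : dual_var) : bool :=
  match u with
  | inl (inl (inl t)) | inl (inl (inr t)) | inl (inr t) => t \in calT Js
  | inr J => J \in calN Js
  end.

Definition D_system : seq ({ffun dual_var -> R} * R) :=
  [seq ([ffun w => - unit_vec u w], 0) | u <- enum dual_var & sign_constrained u]
  ++ [seq ([ffun w => - D_row J w], beta alpha Js J) | J <- enum (calN Js)].

Lemma D_systemP x :
  solves D_system x <-> D_feasible alpha Js v (lam1 x) (lam2 x) (lam3 x) (mu_of x).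
Proof.
rewrite /solves all_cat !all_map; split.
  case/andP => /allP sign /allP rows.
  have nonneg u : sign_constrained u -> 0 <= x u.
    move=> su; have := sign u; rewrite mem_filter su mem_enum /=.
    by rewrite dot_finfun dotN dot_unit_vec oppr_le0; apply.
  split; [|split] => [t tT|J JN|J JN]; first by split; apply: nonneg.
    exact: (nonneg (var_mu J)).
  have := rows J; rewrite mem_enum JN /= dot_finfun dotN dot_D_row => /(_ isT).
  by rewrite /lam1 /lam2 /lam3 /mu_of; lra.
case=> [nonneg [mu_ge0 rows]]; apply/andP; split; apply/allP.
- move=> u; rewrite mem_filter mem_enum andbT /= dot_finfun dotN dot_unit_vec oppr_le0.
  by case: u => [[[t|t]|t]|J] /= h; [case: (nonneg t h) .. | exact: mu_ge0].
- move=> J; rewrite mem_enum /= dot_finfun dotN dot_D_row => /rows.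
  by rewrite /lam1 /lam2 /lam3 /mu_of; lra.
Qed.

Definition mu_negpart J := - \sum_(i < m | Js i == J) Num.min 0 (alpha i).

Lemma D_feasible_negpart :
  D_feasible alpha Js v (fun _ => 0) (fun _ => 0) (fun _ => 0) mu_negpart.
Proof.
split; [|split] => [t _|J _|J _]; first by rewrite lexx.
  by rewrite oppr_ge0; apply: sumr_le0 => i _; rewrite ge_min lexx.
rewrite !big1 ?addr0 // => [|t _|t _|t _]; rewrite ?oppr0 ?addr0 ?subr0 //.
rewrite /mu_negpart /beta -sumrB; apply: sumr_ge0 => i _.
by rewrite subr_ge0 ge_min lexx orbT.
Qed.

Lemma D_obj_negpart : (forall i, Js i != set0) ->
  D_obj Js v (fun _ => 0) (fun _ => 0) (fun _ => 0) mu_negpart = - eta_val alpha.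
Proof.
move=> Js_neq0; rewrite /D_obj big1; last by move=> t _; rewrite !(addr0, mulr0).
rewrite /eta_val oppr0 sub0r /mu_negpart sumrN !opprK.
rewrite [RHS](partition_big Js (fun J => J \in calN Js)) //=.
by move=> i _; rewrite inE Js_neq0 /=; apply/existsP; exists i.
Qed.

Lemma D_obj_le0 l1 l2 l3 mu :
  D_feasible alpha Js v l1 l2 l3 mu -> D_obj Js v l1 l2 l3 mu <= 0.
Proof.
move=> [nonneg [mu_ge0 _]].
rewrite /D_obj -opprD oppr_le0.
apply: addr_ge0; apply: sumr_ge0 => i iP; last exact: mu_ge0.
have [? ? ?] := nonneg i iP; have := v_le1 i => ?.
by apply: addr_ge0; apply: mulr_ge0; lra.
Qed.

Lemma D_optimum_exists : exists l1 l2 l3 mu, D_feasible alpha Js v l1 l2 l3 mu /\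
  forall l1' l2' l3' mu', D_feasible alpha Js v l1' l2' l3' mu' ->
    D_obj Js v l1' l2' l3' mu' <= D_obj Js v l1 l2 l3 mu.
Proof.
have [x /D_systemP feasible_x x_max] :
    exists2 x, solves D_system x &
      forall y, solves D_system y -> dot D_objective y <= dot D_objective x.
  pose x0 := dual_point (fun _ => 0) (fun _ => 0) (fun _ => 0) mu_negpart.
  apply: (lp_max_attained (x0 := x0) (B := 0)); first exact/D_systemP/D_feasible_negpart.
  by move=> y /D_systemP feasible_y; rewrite dot_D_objective; apply: D_obj_le0.
exists (lam1 x), (lam2 x), (lam3 x), (mu_of x); split => // l1 l2 l3 mu feasible.
by have := x_max (dual_point l1 l2 l3 mu); rewrite !dot_D_objective; apply; apply/D_systemP.
Qed.

End DualLP.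

Theorem lemma2 (R : realType) (n m : nat) (alpha : 'I_m -> R)
    (Js : 'I_m -> {set 'I_n}) (hJs : forall i, Js i != set0)
    (T : {set trip n}) (hT : proper_triple_set Js T) :
  exists (l1 l2 l3 : trip n -> R) (mu : {set 'I_n} -> R),
    [/\ D_feasible alpha Js (vhat R T) l1 l2 l3 mu,
        (forall (l1' l2' l3' : trip n -> R) (mu' : {set 'I_n} -> R),
           D_feasible alpha Js (vhat R T) l1' l2' l3' mu' ->
           D_obj Js (vhat R T) l1' l2' l3' mu' <= D_obj Js (vhat R T) l1 l2 l3 mu),
        - eta_val alpha <= D_obj Js (vhat R T) l1 l2 l3 mu
      & D_obj Js (vhat R T) l1 l2 l3 mu <= 0].
Proof.
have vhat_le1 t : vhat R T t <= 1 by rewrite /vhat; case: (t \in T); rewrite ?lexx ?ler01.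
have [l1 [l2 [l3 [mu [feasible optimal]]]]] := D_optimum_exists alpha Js vhat_le1.
exists l1, l2, l3, mu; split => //.
  have := optimal _ _ _ _ (D_feasible_negpart alpha Js (vhat R T)).
  by rewrite (D_obj_negpart alpha (vhat R T) hJs).
by have := D_obj_le0 vhat_le1 feasible.
Qed.
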